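(* Let $J\ge5$ be an integer and $L\in\{2,\dots,J-1\}$. Let $\mathbb{A}$ be the $J\times J$ symmetric tridiagonal matrix with $\mathbb{A}_{11}=\mathbb{A}_{JJ}=1$, $\mathbb{A}_{jj}=2$ for $1<j<J$, $\mathbb{A}_{j,j+1}=\mathbb{A}_{j+1,j}=-1$ for $1\le j<J$, and all other entries zero. Let $D=\mathrm{diag}(d_1,\dots,d_J)$ with $d_L=-1$ and $d_j=2$ for $j\ne L$, and let $\mathbb{B}:=\mathbb{A}D$ (so $\mathbb{B}$ coincides with $2\mathbb{A}$ except in rows $L-1,L,L+1$, whose nonzero entries in columns $L-2,\dots,L+2$ are $2(-1,2,\tfrac12)$ in row $L-1$ (columns $L-2,L-1,L$), $2(-1,-1,-1)$ in row $L$ (columns $L-1,L,L+1$), and $2(\tfrac12,2,-1)$ in row $L+1$ (columns $L,L+1,L+2$)). Then $\mathbb{B}$ is diagonalizable over $\mathbb{R}$ with $J$ distinct eigenvalues, which can be ordered as $$-1<\mu_{-1}<\mu_0=0<\mu_1<\dots<\mu_{J-2}<8 .$$ In particular, $\mathbb{B}$ has exactly one negative eigenvalue. *)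

From mathcomp Require Import all_boot all_order all_algebra.
From mathcomp Require Export reals.
Set Implicit Arguments. Unset Strict Implicit. Unset Printing Implicit Defensive.
Import Order.TTheory GRing.Theory Num.Theory.
Local Open Scope ring_scope.

(* Indices are 0-based: the paper's index j (1 <= j <= J) corresponds to the
   ordinal i : 'I_J with i.+1 = j. *)

Definition matA (R : realType) (J : nat) : 'M[R]_J :=
  \matrix_(i < J, j < J)
    if i == j then (if (i == 0%N :> nat) || (i == J.-1 :> nat) then 1 else 2)
    else if (i.+1 == j :> nat) || (j.+1 == i :> nat) then -1 else 0.

Definition matD (R : realType) (J L : nat) : 'M[R]_J :=
  diag_mx (\row_(j < J) if j.+1 == L then -1 else 2).

Definition matB (R : realType) (J L : nat) : 'M[R]_J := matA R J *m matD R J L.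

From mathcomp Require Import all_boot all_order all_algebra.
From mathcomp Require Import reals polyrcf ring lra zify.
Import Order.TTheory GRing.Theory Num.Theory.
Local Open Scope ring_scope.
Set Implicit Arguments. Unset Strict Implicit. Unset Printing Implicit Defensive.

(* Write A = G^T G with G the (J-1) x J difference matrix. Then B = A D =
   G^T (G D) has the eigenvalue 0 (left eigenvector (1, ..., 1)) together with
   the spectrum of the Jacobi matrix G D G^T, whose leading principal minors
   P_k obey a three-term recurrence with positive weights d_i^2. Hence the P_k
   form a Sturm sequence: their roots are real, simple and interlace, and the
   signs of P_k at -1 and at 8 confine them to (-1, 8). The sign of P_(J-1)(0)
   makes the smallest root negative. Finally, Green's identity for the
   eigenvector recurrence makes the difference vectors of the eigenvectors of
   distinct roots a orthogonal for the form sum_k d_k y_k^2, with energy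
   a |u|^2; two non-positive roots would thus span a plane on which this form
   is non-positive, impossible since it has a single negative coefficient. *)

Lemma ltn_homo_prefix (d : Order.disp_t) (T : porderType d) (f : nat -> T) n :
  (forall i, (i.+1 < n)%N -> (f i < f i.+1)%O) ->
  forall i j, (i < j)%N -> (j < n)%N -> (f i < f j)%O.
Proof.
move=> f_inc i j ij jn.
have Dconvex : {in gtn n &, forall i j k, (i < k < j)%N -> k \in gtn n}.
  by move=> ? ? _ /[!inE] j_lt k /andP[_ /ltn_trans]; apply.
apply: (@homo_ltn_in _ (gtn n) f (fun x y => (x < y)%O) _ Dconvex) => //.
- by move=> ? ? ?; apply: lt_trans.
- by move=> k _ /[!inE]; apply: f_inc.
- by rewrite inE (ltn_trans ij jn).
Qed.

Lemma increasing_mkseq_uniq (d : Order.disp_t) (T : porderType d) (f : nat -> T) n :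
  (forall i, (i.+1 < n)%N -> (f i < f i.+1)%O) -> uniq (mkseq f n).
Proof.
move=> f_inc; apply/mkseq_uniqP => i j /[!inE] i_lt j_lt f_ij.
case: (ltngtP i j) => // ij.
- by have := ltn_homo_prefix f_inc ij j_lt; rewrite f_ij ltxx.
- by have := ltn_homo_prefix f_inc ij i_lt; rewrite f_ij ltxx.
Qed.

Lemma sum_ord_if_eq (V : nmodType) n (F : nat -> V) c :
  \sum_(i < n) (if (i : nat) == c then F i else 0) = if (c < n)%N then F c else 0.
Proof.
rewrite -big_mkcond /=; case: ltnP => [c_lt|c_ge].
  by rewrite (big_pred1 (Ordinal c_lt)) // => i; exact: val_eqE.
rewrite big_pred0 // => i; apply/negbTE/eqP => ic.
by have := ltn_ord i; rewrite ic ltnNge c_ge.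
Qed.

Lemma row_neq0 (V : nmodType) n (F : nat -> V) k :
  (k < n)%N -> F k != 0 -> \row_(i < n) F i != 0.
Proof.
move=> k_lt; apply: contraNneq => /rowP /(_ (Ordinal k_lt)).
by rewrite !mxE => ->.
Qed.

Lemma sum_by_parts (R : comPzRingType) (g v : nat -> R) n :
  \sum_(k < n.+1) (v k.+1 - v k) * g k =
  \sum_(k < n) v k.+1 * (g k - g k.+1) + v n.+1 * g n - v 0%N * g 0%N.
Proof.
elim: n => [|n IHn]; first by rewrite big_ord0 big_ord1; ring.
by rewrite big_ord_recr [in RHS]big_ord_recr /= IHn; ring.
Qed.

Lemma opposite_signs (R : realDomainType) (x y : R) m :
  0 < (-1) ^+ m.+1 * x -> 0 < (-1) ^+ m * y -> x * y < 0.
Proof.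
have sign_sqr : (-1) ^+ m * (-1) ^+ m = 1 :> R.
  by rewrite -exprD -signr_odd oddD addbb.
rewrite exprS mulN1r mulNr oppr_gt0; nra.
Qed.

Section IncreasingRoots.
Variable R : numFieldType.

Lemma big_mkseq_XsubC (s : nat -> R) n :
  \prod_(x <- mkseq s n) ('X - x%:P) = \prod_(i < n) ('X - (s i)%:P).
Proof. by rewrite big_map -(big_mkord xpredT (fun i => 'X - (s i)%:P)) /index_iota subn0. Qed.

Lemma prod_XsubC_of_roots (p : {poly R}) (s : nat -> R) n :
  p \is monic -> size p = n.+1 -> (forall i, (i.+1 < n)%N -> s i < s i.+1) ->
  (forall i, (i < n)%N -> root p (s i)) -> p = \prod_(i < n) ('X - (s i)%:P).
Proof.
move=> p_monic p_size s_inc p_s.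
have s_roots : all (root p) (mkseq s n).
  by apply/allP => _ /mapP[i /[!mem_iota] /andP[_ ?] ->]; apply: p_s.
rewrite [LHS](all_roots_prod_XsubC _ s_roots); last 2 first.
- by rewrite size_mkseq.
- by rewrite uniq_rootsE increasing_mkseq_uniq.
by rewrite (monicP p_monic) scale1r big_mkseq_XsubC.
Qed.

Lemma signed_prod_gt0 (r : nat -> R) x n i : (i <= n)%N ->
  (forall j, (j < i)%N -> r j < x) -> (forall j, (i <= j < n)%N -> x < r j) ->
  0 < (-1) ^+ (n - i) * \prod_(j < n) (x - r j).
Proof.
elim: n => [|n IHn] i_le below above; first by rewrite big_ord0 mulr1.
move: i_le; rewrite leq_eqVlt => /orP[/eqP i_n|i_lt].
  rewrite -i_n subnn mul1r; apply: prodr_gt0 => j _.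
  by rewrite subr_gt0 below // i_n.
have above' j : (i <= j < n)%N -> x < r j.
  by move=> /andP[ij jn]; apply: above; rewrite ij ltnW.
rewrite big_ord_recr /= subSn // exprS mulN1r mulNr mulrA -mulrN opprB.
by apply: mulr_gt0; [exact: IHn | rewrite subr_gt0 above // ltnSn andbT -ltnS].
Qed.

End IncreasingRoots.

Section IncreasingEigenvalues.
Variables (R : numFieldType) (n : nat) (M : 'M[R]_n) (mu : nat -> R).
Hypotheses (mu_inc : forall i, (i.+1 < n)%N -> mu i < mu i.+1)
           (mu_eigen : forall k, (k < n)%N -> eigenvalue M (mu k)).

Lemma char_poly_increasing_eigenvalues :
  char_poly M = \prod_(k < n) ('X - (mu k)%:P).
Proof.
apply: prod_XsubC_of_roots mu_inc _; [exact: char_poly_monic | exact: size_char_poly |].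
by move=> k /mu_eigen; rewrite eigenvalue_root_char.
Qed.

Lemma eigenvalue_increasingP a : eigenvalue M a <-> exists2 k, (k < n)%N & a = mu k.
Proof.
split=> [|[k /mu_eigen + ->] //].
rewrite eigenvalue_root_char char_poly_increasing_eigenvalues rootE horner_prod.
by move/prodf_eq0 => [k _]; rewrite hornerXsubC subr_eq0 => /eqP ->; exists k.
Qed.

End IncreasingEigenvalues.

Lemma diagonalizable_increasing_eigenvalues (R : numFieldType) n (M : 'M[R]_n)
    (mu : nat -> R) :
  (forall i, (i.+1 < n)%N -> mu i < mu i.+1) ->
  (forall k, (k < n)%N -> eigenvalue M (mu k)) -> diagonalizable M.
Proof.
case: n M mu => [|n] M mu mu_inc mu_eigen.
  by rewrite (_ : M = 0%:M); [exact: diagonalizable_scalar | apply/matrixP => -[]].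
apply/diagonalizableP; exists (mkseq mu n.+1); first exact: increasing_mkseq_uniq.
rewrite big_mkseq_XsubC -(char_poly_increasing_eigenvalues mu_inc mu_eigen).
exact: mxminpoly_dvd_char.
Qed.

Section Interlacing.
Variable R : rcfType.

Lemma roots_between (q : {poly R}) (a b : nat -> R) n :
  (forall i, (i < n)%N -> a i < b i) -> (forall i, (i < n)%N -> q.[a i] * q.[b i] < 0) ->
  exists s : nat -> R, forall i, (i < n)%N -> a i < s i < b i /\ root q (s i).
Proof.
move=> ab q_ab.
have root_i i : exists x, (i < n)%N ==> (a i < x < b i) && root q x.
  have [i_lt|_] := ltnP i n; last by exists 0.
  have [x /[!in_itv]/= x_in x_root] := poly_ivtoo (ltW (ab i i_lt)) (q_ab i i_lt).
  by exists x; rewrite x_in x_root.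
exists (fun i => xchoose (root_i i)) => i i_lt.
by have /implyP/(_ i_lt)/andP[] := xchooseP (root_i i).
Qed.

Lemma interlacing_roots (q : {poly R}) (r : nat -> R) lo hi n :
  q \is monic -> size q = n.+2 -> lo < hi ->
  (forall i, (i.+1 < n)%N -> r i < r i.+1) ->
  (forall i, (i < n)%N -> lo < r i < hi) ->
  0 < (-1) ^+ n.+1 * q.[lo] ->
  (forall i, (i < n)%N -> 0 < (-1) ^+ (n - i) * q.[r i]) ->
  0 < q.[hi] ->
  exists s : nat -> R,
    [/\ forall i, (i <= n)%N -> lo < s i < hi,
        forall i, (i < n)%N -> s i < r i < s i.+1 &
        q = \prod_(i < n.+1) ('X - (s i)%:P)].
Proof.
move=> q_monic q_size lo_hi r_inc r_bnd q_lo q_r q_hi.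
pose a i := if i is i'.+1 then r i' else lo.
pose b i := if i == n then hi else r i.
have a_sign i : (i <= n)%N -> 0 < (-1) ^+ (n - i).+1 * q.[a i].
  by case: i => [|i] i_le; rewrite ?subn0 // subnSK //; apply: q_r.
have b_sign i : (i <= n)%N -> 0 < (-1) ^+ (n - i) * q.[b i].
  rewrite /b; case: eqP => [-> _|/eqP i_n i_le]; first by rewrite subnn mul1r.
  by apply: q_r; rewrite ltn_neqAle i_n.
have a_ge i : (i <= n)%N -> lo <= a i.
  by case: i => [|i] //= i_lt; case/andP: (r_bnd i i_lt) => /ltW.
have b_le i : (i <= n)%N -> b i <= hi.
  rewrite /b; case: eqP => [//|/eqP i_n i_le].
  have i_lt : (i < n)%N by rewrite ltn_neqAle i_n.
  by case/andP: (r_bnd i i_lt) => _ /ltW.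
have a_lt_b i : (i <= n)%N -> a i < b i.
  move=> i_le; rewrite /b; case: eqP => [i_n|/eqP i_n].
    case: i i_le i_n => [//|i] _ i_n /=.
    by rewrite -i_n in r_bnd; case/andP: (r_bnd i (ltnSn i)).
  have i_lt : (i < n)%N by rewrite ltn_neqAle i_n.
  case: i i_le i_n i_lt => [|i] _ _ i_lt /=; last exact: r_inc.
  by case/andP: (r_bnd 0 i_lt).
have [s s_spec] := roots_between (n := n.+1) a_lt_b
  (fun i i_le => opposite_signs (a_sign i i_le) (b_sign i i_le)).
have s_interlace i : (i < n)%N -> s i < r i < s i.+1.
  move=> i_lt; have [/andP[_ si] _] := s_spec i (ltnW i_lt).
  have [/andP[si1 _] _] := s_spec i.+1 i_lt.
  by rewrite /b (ltn_eqF i_lt) in si; rewrite si si1.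
exists s; split => //.
- move=> i i_le; have [/andP[as_ sb] _] := s_spec i i_le.
  by rewrite (le_lt_trans (a_ge i i_le) as_) (lt_le_trans sb (b_le i i_le)).
- apply: prod_XsubC_of_roots => // [i|i /s_spec[] //].
  by rewrite ltnS => /s_interlace /andP[/lt_trans]; apply.
Qed.

End Interlacing.

Section TridiagonalRecurrence.
Variables (R : realType) (L : nat).

Definition dcoef (i : nat) : R := if i.+1 == L then -1 else 2.

Lemma dcoef_neq0 i : dcoef i != 0.
Proof. by rewrite /dcoef; case: ifP => _; rewrite ?oppr_eq0 ?oner_eq0 ?pnatr_eq0. Qed.

Lemma dcoef_sqr_gt0 i : 0 < dcoef i ^+ 2.
Proof. by rewrite lt_def sqr_ge0 sqrf_eq0 dcoef_neq0. Qed.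

(* tpoly k is the characteristic polynomial of the leading k x k block of the
   Jacobi matrix G D G^T, whose diagonal entries are d_i + d_(i+1) and whose
   off-diagonal entries are -d_(i+1). *)
Fixpoint tpoly (k : nat) : {poly R} :=
  match k with
  | 0 => 1
  | 1 => 'X - (dcoef 0 + dcoef 1)%:P
  | (k'.+1 as k1).+1 =>
      ('X - (dcoef k1 + dcoef k1.+1)%:P) * tpoly k1 - (dcoef k1 ^+ 2)%:P * tpoly k'
  end.

Lemma horner_tpoly1 x : (tpoly 1).[x] = x - (dcoef 0 + dcoef 1).
Proof. by rewrite /= !hornerE. Qed.

Lemma horner_tpolySS k x :
  (tpoly k.+2).[x] = (x - (dcoef k.+1 + dcoef k.+2)) * (tpoly k.+1).[x]
                     - dcoef k.+1 ^+ 2 * (tpoly k).[x].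
Proof. by rewrite /= !hornerE. Qed.

Lemma tpoly_monic_size k : tpoly k \is monic /\ size (tpoly k) = k.+1.
Proof.
elim/ltn_ind: k => -[|[|k]] IH.
- by rewrite monic1 size_poly1.
- by rewrite monicXsubC size_XsubC.
have [monic1 size1] := IH k.+1 (ltnSn _).
have [_ size0] := IH k (leqnSn _).
pose p := ('X - (dcoef k.+1 + dcoef k.+2)%:P) * tpoly k.+1.
pose q := (dcoef k.+1 ^+ 2)%:P * tpoly k.
have -> : tpoly k.+2 = p - q by [].
have p_monic : p \is monic by rewrite monicMl ?monicXsubC.
have size_p : size p = k.+3.
  by rewrite size_Mmonic ?size_XsubC ?size1 ?monic_neq0 ?monicXsubC.
have size_q : (size (- q) < size p)%N.
  by rewrite size_polyN /q mul_polyC (leq_ltn_trans (size_scale_leq _ _)) ?size0 ?size_p.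
by rewrite monicE lead_coefDl // -monicE p_monic size_polyDl.
Qed.

Lemma tpoly_gt0_at8 k : 0 < (tpoly k).[8].
Proof.
suff [] : 0 < (tpoly k).[8] /\ 2 * (tpoly k).[8] <= (tpoly k.+1).[8] by [].
elim: k => [|k [p_gt0 p_grow]].
  by rewrite horner_tpoly1 /= hornerC /dcoef; do 2 case: eqP => _; lra.
split; first lra.
by rewrite horner_tpolySS /dcoef; do 2 case: eqP => _; nra.
Qed.

(* The solution of the recurrence uvec_rec with u_0 = 0 and u_1 = 1; for an
   eigenvalue a of B, u_(k+1) = x_k - x_(k+1) for a left eigenvector x. *)
Definition uvec (a : R) (k : nat) : R :=
  if k is k'.+1 then (-1) ^+ k' * (tpoly k').[a] / \prod_(i < k') dcoef i.+1 else 0.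

Lemma uvec1 a : uvec a 1 = 1.
Proof. by rewrite /uvec /= big_ord0 hornerC mul1r divr1. Qed.

Lemma uvec_eq0 a k : (uvec a k.+1 == 0) = root (tpoly k) a.
Proof.
have prod_neq0 : \prod_(i < k) dcoef i.+1 != 0 by apply/prodf_neq0 => i _; exact: dcoef_neq0.
by rewrite /uvec /= !mulf_eq0 invr_eq0 (negbTE prod_neq0) orbF signr_eq0.
Qed.

Lemma uvec_rec a k :
  a * uvec a k.+1 = dcoef k * (uvec a k.+1 - uvec a k)
                    - dcoef k.+1 * (uvec a k.+2 - uvec a k.+1).
Proof.
have d_neq0 := dcoef_neq0.
case: k => [|k].
  by rewrite uvec1 /uvec big_ord1 horner_tpoly1 /=; field.
rewrite /uvec horner_tpolySS !big_ord_recr /=.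
have p_neq0 : \prod_(i < k) dcoef i.+1 != 0 by apply/prodf_neq0 => i _.
by rewrite !exprS; field; rewrite ?p_neq0 ?d_neq0.
Qed.

Hypothesis L_ge2 : (2 <= L)%N.

Lemma dcoef0 : dcoef 0 = 2.
Proof. by rewrite /dcoef ifN // neq_ltn L_ge2. Qed.

Lemma tpoly_signed_gt0_atN1 k : 0 < (-1) ^+ k * (tpoly k).[-1].
Proof.
pose Q k := (-1) ^+ k * (tpoly k).[-1].
have Q_rec j : Q j.+2 = (1 + dcoef j.+1 + dcoef j.+2) * Q j.+1 - dcoef j.+1 ^+ 2 * Q j.
  by rewrite /Q horner_tpolySS !exprS; ring.
(* The factor 4 pays for the one step where d_(k+1) = 2 and d_(k+2) = -1. *)
suff [] : 0 < Q k /\ Q k <= Q k.+1 /\ ((k + 3 <= L)%N -> 4 * Q k <= Q k.+1) by [].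
elim: k => [|k [Q_gt0 [Q_le Q_4]]].
  rewrite /Q /= hornerC horner_tpoly1 dcoef0 /dcoef expr0 expr1.
  by case: eqP => [<-|_]; do ?split => //; lra.
split; first lra.
rewrite Q_rec /dcoef; case: eqP => [e1|_]; case: eqP => [e2|_].
- by exfalso; lia.
- by split; [nra | move=> ?; exfalso; lia].
- by split; [have := Q_4 ltac:(lia); nra | move=> ?; exfalso; lia].
- by split; [nra | move=> ?; have := Q_4 ltac:(lia); nra].
Qed.

Lemma tpoly_signed_at0 k :
  (-1) ^+ k * (tpoly k).[0] =
  if (k.+1 < L)%N then 2 ^+ k * k.+1%:R else 2 ^+ k.-1 * (2 - k%:R).
Proof.
pose G j := (-1) ^+ j * (tpoly j).[0].
have G_rec j : G j.+2 = (dcoef j.+1 + dcoef j.+2) * G j.+1 - dcoef j.+1 ^+ 2 * G j.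
  by rewrite /G horner_tpolySS !exprS; ring.
rewrite -/(G k); elim/ltn_ind: k => -[|[|k]] IH.
- by rewrite /G /= hornerC L_ge2 expr0 mul1r.
- rewrite /G horner_tpoly1 dcoef0 /dcoef.
  case: eqP => [<-|/eqP L_neq2] /=; first by rewrite expr0 expr1; lra.
  by rewrite ltn_neqAle L_neq2 L_ge2 /= !expr1; lra.
rewrite G_rec IH // IH // /dcoef.
case: eqP => [e1|n1]; case: eqP => [e2|n2]; first by exfalso; lia.
all: repeat (case: ifP => ?; try (exfalso; lia)).
4: have -> : k = k.-1.+1 by lia.
all: by rewrite /= -!natr1 !exprS; ring.
Qed.

Lemma tpoly_roots k : exists r : nat -> R,
  [/\ forall i, (i.+1 < k)%N -> r i < r i.+1,
      forall i, (i < k)%N -> -1 < r i < 8,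
      tpoly k = \prod_(i < k) ('X - (r i)%:P) &
      forall i, (i < k)%N -> 0 < (-1) ^+ (k.-1 - i) * (tpoly k.-1).[r i]].
Proof.
elim: k => [|k [r [r_inc r_bnd tpolyE r_sign]]].
  by exists (fun=> 0); split => //; rewrite big_ord0.
have tpoly_sign_at_r j : (j < k)%N -> 0 < (-1) ^+ (k - j) * (tpoly k.+1).[r j].
  case: k j r_inc r_bnd tpolyE r_sign => // k j _ _ tpolyE r_sign j_lt.
  have root_r : (tpoly k.+1).[r j] = 0.
    by rewrite tpolyE horner_prod (bigD1 (Ordinal j_lt)) //= hornerXsubC subrr mul0r.
  rewrite horner_tpolySS root_r mulr0 sub0r subSn // exprS mulN1r mulrNN.
  by rewrite mulrCA mulr_gt0 ?dcoef_sqr_gt0 ?r_sign.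
have [q_monic q_size] := tpoly_monic_size k.+1.
have lo_hi : -1 < 8 :> R by lra.
have [s [s_bnd s_interlace tpolyE1]] := interlacing_roots q_monic q_size lo_hi
  r_inc r_bnd (tpoly_signed_gt0_atN1 k.+1) tpoly_sign_at_r (tpoly_gt0_at8 k.+1).
have s_inc i : (i.+1 < k.+1)%N -> s i < s i.+1.
  by move=> /s_interlace /andP[/lt_trans]; apply.
have s_le i j : (i <= j <= k)%N -> s i <= s j.
  case/andP; rewrite leq_eqVlt => /orP[/eqP -> //|ij jk].
  exact/ltW/(ltn_homo_prefix s_inc ij).
exists s; split => // i i_le.
rewrite /= tpolyE horner_prod; under eq_bigr do rewrite hornerXsubC.
apply: signed_prod_gt0 => // j.
- move=> ji; case/andP: (s_interlace j (leq_trans ji i_le)) => _ /lt_le_trans; apply.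
  by rewrite s_le // ji.
- case/andP=> ij jk; case/andP: (s_interlace j jk) => sj _.
  by apply: le_lt_trans sj; rewrite s_le // ij ltnW.
Qed.

End TridiagonalRecurrence.

Section Spectrum.
Variables (R : realType) (J L : nat).
Hypothesis J_gt1 : (1 < J)%N.

Definition neumann_lap (F : nat -> R) (j : nat) : R :=
  (if (0 < j)%N then F j - F j.-1 else 0) + (if (j.+1 < J)%N then F j - F j.+1 else 0).

Lemma row_mul_matA (F : nat -> R) :
  (\row_(i < J) F i) *m matA R J = \row_(j < J) neumann_lap F j.
Proof.
apply/rowP => j; rewrite !mxE.
pose c : R := if ((j : nat) == 0%N) || ((j : nat) == J.-1) then 1 else 2.
have entry (i : 'I_J) : F i * matA R J i j =
    (if i == j then F j * c else 0) + (if i.+1 == j :> nat then - F i else 0)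
    + (if j.+1 == i :> nat then - F i else 0).
  rewrite mxE; case: eqVneq => [-> | ij]; last first.
    have ij' : (i : nat) != j by [].
    by case: eqP => e1; case: eqP => e2 /=; try lra; exfalso; lia.
  by rewrite (gtn_eqF (ltnSn j)) !addr0.
under eq_bigr => i _ do rewrite mxE entry.
rewrite !big_split /= -big_mkcond big_pred1_eq.
have sum_left : \sum_(i < J) (if i.+1 == j :> nat then - F i else 0) =
                if (0 < j)%N then - F j.-1 else 0.
  case: (posnP j) => [j0|j_gt0]; first by rewrite big1 // => i _; rewrite j0.
  have j1_lt : (j.-1 < J)%N by have := ltn_ord j; lia.
  have := sum_ord_if_eq J (fun i => - F i) j.-1; rewrite j1_lt => <-.
  by apply: eq_bigr => i _; congr (if _ then _ else _); apply/eqP/eqP; lia.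
have sum_right : \sum_(i < J) (if j.+1 == i :> nat then - F i else 0) =
                 if (j.+1 < J)%N then - F j.+1 else 0.
  by rewrite -(sum_ord_if_eq _ (fun i => - F i)); apply: eq_bigr => i _; rewrite eq_sym.
rewrite sum_left sum_right /neumann_lap /c.
have := ltn_ord j; case: (posnP j) => [-> _|j_gt0 j_lt] /=; first by rewrite J_gt1; lra.
case: ltnP => j_J.
  by rewrite ifF; [lra | apply/negbTE; lia].
by rewrite ifT; [lra | apply/eqP; lia].
Qed.

Lemma row_mul_matB (F : nat -> R) :
  (\row_(i < J) F i) *m matB R J L = \row_(j < J) (neumann_lap F j * dcoef R L j).
Proof.
rewrite /matB /matD mulmxA row_mul_matA mul_mx_diag.
by apply/rowP => j; rewrite !mxE.
Qed.

Lemma eigenvalue_matB0 : eigenvalue (matB R J L) 0.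
Proof.
apply/eigenvalueP; exists (\row_(i < J) 1); last first.
  by apply: (@row_neq0 _ _ (fun=> 1) 0) => //; [exact: ltnW | exact: oner_neq0].
rewrite (row_mul_matB (fun=> 1)) scale0r; apply/rowP => j; rewrite !mxE /neumann_lap !subrr.
by rewrite !if_same addr0 mul0r.
Qed.

Lemma uvec_root a : root (tpoly R L J.-1) a -> uvec L a J = 0.
Proof. by move=> a_root; apply/eqP; rewrite -(ltn_predK J_gt1) uvec_eq0. Qed.

Lemma eigenvalue_matB_root a :
  a != 0 -> root (tpoly R L J.-1) a -> eigenvalue (matB R J L) a.
Proof.
move=> a_neq0 a_root; pose u := uvec L a.
have uJ : u J = 0 := uvec_root a_root.
pose F k := dcoef R L k * (u k.+1 - u k) / a.
have F_diff k : F k - F k.+1 = u k.+1.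
  by rewrite /F -mulrBl -uvec_rec mulrC mulKf.
have u0 : u 0 = 0 by [].
have u1 : u 1 = 1 by exact: uvec1.
clearbody u.
have lap_F j : (j < J)%N -> neumann_lap F j = u j.+1 - u j.
  rewrite /neumann_lap => j_lt; case: (posnP j) => [->|j_gt0] /=.
    by rewrite J_gt1 F_diff add0r u0 subr0.
  have := F_diff j.-1; rewrite (ltn_predK j_gt0) => F_prev.
  case: (ltnP j.+1 J) => j_J /=; first by have := F_diff j; lra.
  have j_last : j.+1 = J by lia.
  by rewrite j_last uJ addr0; lra.
apply/eigenvalueP; exists (\row_(i < J) F i); last first.
  apply: (@row_neq0 _ _ F 0) => //; first exact: ltnW.
  by rewrite /F u1 u0 subr0 mulr1 mulf_neq0 ?invr_eq0 ?dcoef_neq0.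
rewrite row_mul_matB; apply/rowP => j; rewrite !mxE lap_F //.
by rewrite /F mulrC; field.
Qed.

Definition qform (y z : nat -> R) : R := \sum_(k < J) dcoef R L k * y k * z k.

Definition fdiff (v : nat -> R) (k : nat) : R := v k.+1 - v k.

Lemma qform_sym y z : qform y z = qform z y.
Proof. by apply: eq_bigr => k _; rewrite mulrAC. Qed.

Lemma qform_lin_comb y z s t :
  qform (fun k => s * y k + t * z k) (fun k => s * y k + t * z k) =
  s ^+ 2 * qform y y + 2 * s * t * qform y z + t ^+ 2 * qform z z.
Proof. by rewrite /qform !mulr_sumr -!big_split /=; apply: eq_bigr => k _; ring. Qed.

Lemma qform_term_ge0 y k : y L.-1 = 0 -> 0 <= dcoef R L k * y k * y k.
Proof.
move=> yL; rewrite -mulrA -expr2; case: (eqVneq k L.-1) => [->|kL].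
  by rewrite yL expr0n mulr0.
have kL' : (k.+1 == L) = false by apply: contraNF kL => /eqP <-.
by rewrite /dcoef kL' mulr_ge0 ?sqr_ge0.
Qed.

Lemma qform_ge0 y : y L.-1 = 0 -> 0 <= qform y y.
Proof. by move=> yL; apply: sumr_ge0 => k _; apply: qform_term_ge0. Qed.

Lemma qform_eq0 y : y L.-1 = 0 -> qform y y = 0 -> y 0%N = 0.
Proof.
move=> yL Q0; have [L1|L_neq1] := eqVneq L 1; first by rewrite -yL L1.
have /(_ (Ordinal (ltnW J_gt1)) isT) := psumr_eq0P (fun (k : 'I_J) _ => @qform_term_ge0 y k yL) Q0.
rewrite /dcoef /= ifN_eqC //; move/eqP; rewrite -mulrA mulf_eq0 mulf_eq0 orbb.
by rewrite pnatr_eq0 /= => /eqP.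
Qed.

Lemma uvec_green a (v : nat -> R) : v 0%N = 0 -> v J = 0 ->
  a * \sum_(k < J.-1) uvec L a k.+1 * v k.+1 = qform (fdiff (uvec L a)) (fdiff v).
Proof.
move=> v0 vJ.
have := sum_by_parts (fun k => dcoef R L k * fdiff (uvec L a) k) v J.-1.
rewrite (ltn_predK J_gt1) vJ v0 !mul0r subr0 addr0 => by_parts.
rewrite /qform (eq_bigr (fun k : 'I_J => (v k.+1 - v k) * (dcoef R L k * fdiff (uvec L a) k))).
  rewrite by_parts mulr_sumr; apply: eq_bigr => k _.
  by rewrite /fdiff -uvec_rec [RHS]mulrC mulrA.
by move=> k _; rewrite /fdiff; ring.
Qed.

Lemma uvec_energy a : root (tpoly R L J.-1) a ->
  qform (fdiff (uvec L a)) (fdiff (uvec L a)) = a * \sum_(k < J.-1) uvec L a k.+1 ^+ 2.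
Proof. by move=> /uvec_root uJ; rewrite -uvec_green. Qed.

Lemma sum_sqr_uvec_ge1 (a : R) : 1 <= \sum_(k < J.-1) uvec L a k.+1 ^+ 2.
Proof.
have J1_gt0 : (0 < J.-1)%N by rewrite -ltnS (ltn_predK J_gt1).
rewrite (bigD1 (Ordinal J1_gt0)) // (_ : uvec L a (Ordinal J1_gt0).+1 = 1).
  by rewrite expr1n lerDl; apply: sumr_ge0 => k _; apply: sqr_ge0.
exact: uvec1.
Qed.

Lemma uvec_orthogonal a b : root (tpoly R L J.-1) a -> root (tpoly R L J.-1) b -> a != b ->
  qform (fdiff (uvec L a)) (fdiff (uvec L b)) = 0.
Proof.
move=> /uvec_root uaJ /uvec_root ubJ ab.
have := @uvec_green a (uvec L b) erefl ubJ.
set S := \sum_(k < J.-1) _ => green_a.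
have green_b : b * S = qform (fdiff (uvec L a)) (fdiff (uvec L b)).
  rewrite qform_sym -uvec_green //; congr (_ * _).
  by apply: eq_bigr => k _; rewrite mulrC.
have : (a - b) * S = 0 by rewrite mulrBl green_a green_b subrr.
move/eqP; rewrite mulf_eq0 subr_eq0 (negbTE ab) /= => /eqP S0.
by rewrite -green_a S0 mulr0.
Qed.

Lemma nonpos_root_tpoly_uniq a b : root (tpoly R L J.-1) a -> root (tpoly R L J.-1) b ->
  a <= 0 -> b <= 0 -> a = b.
Proof.
wlog ab : a b / a < b => [hwlog ra rb a_le0 b_le0|ra rb _ b_le0].
  by case: (ltgtP a b) => // [ab|ba]; [apply: hwlog | apply/esym/hwlog].
exfalso; set w := fdiff (uvec L a); set w' := fdiff (uvec L b).
have w'0 : w' 0%N = 1 by rewrite /w' /fdiff uvec1 [uvec _ _ 0]/= subr0.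
have Qw : qform w w < 0.
  by rewrite uvec_energy //; have := sum_sqr_uvec_ge1 a; nra.
have Qw' : qform w' w' <= 0.
  by rewrite uvec_energy //; have := sum_sqr_uvec_ge1 b; nra.
have Qww' : qform w w' = 0 := uvec_orthogonal ra rb (negbT (lt_eqF ab)).
pose y k := w L.-1 * w' k + (- w' L.-1) * w k.
have yL : y L.-1 = 0 by rewrite /y; ring.
have Qy : qform y y = w L.-1 ^+ 2 * qform w' w' + w' L.-1 ^+ 2 * qform w w.
  by rewrite qform_lin_comb qform_sym Qww' mulr0 addr0 sqrrN.
have Qy_ge0 := qform_ge0 yL.
have Qy1_le0 : w L.-1 ^+ 2 * qform w' w' <= 0 := mulr_ge0_le0 (sqr_ge0 _) Qw'.
have Qy2_le0 : w' L.-1 ^+ 2 * qform w w <= 0 := mulr_ge0_le0 (sqr_ge0 _) (ltW Qw).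
have w'L : w' L.-1 = 0.
  apply/eqP; rewrite -(sqrf_eq0 (w' L.-1)); apply/eqP.
  by apply: (mulIf (negbT (lt_eqF Qw))); rewrite mul0r; lra.
have /(qform_eq0 yL) : qform y y = 0 by lra.
rewrite /y w'L w'0 oppr0 mul0r addr0 mulr1 => wL.
by have := qform_ge0 wL; lra.
Qed.

Hypotheses (L_ge2 : (2 <= L)%N) (L_le : (L <= J.-1)%N) (J_ge4 : (4 <= J)%N).

Lemma tpoly_roots_sign : exists r : nat -> R,
  [/\ forall i, (i.+1 < J.-1)%N -> r i < r i.+1,
      forall i, (i < J.-1)%N -> -1 < r i < 8,
      forall i, (i < J.-1)%N -> root (tpoly R L J.-1) (r i),
      r 0%N < 0 &
      forall i, (0 < i < J.-1)%N -> 0 < r i].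
Proof.
have [r [r_inc r_bnd tpolyE _]] := @tpoly_roots R L L_ge2 J.-1.
have r_root i : (i < J.-1)%N -> root (tpoly R L J.-1) (r i).
  move=> i_lt; rewrite /root tpolyE horner_prod (bigD1 (Ordinal i_lt)) //=.
  by rewrite hornerXsubC subrr mul0r.
have at0 : (-1) ^+ J.-1 * (tpoly R L J.-1).[0] < 0.
  rewrite tpoly_signed_at0 // ifF; last by apply/negbTE; lia.
  by rewrite pmulr_rlt0 ?exprn_gt0 // subr_lt0 ltr_nat; lia.
have P0_neq0 : (tpoly R L J.-1).[0] != 0.
  by apply: contraTneq at0 => ->; rewrite mulr0 ltxx.
have r_neq0 j : (j < J.-1)%N -> r j != 0.
  by move=> /r_root; apply: contraTneq => ->; exact: P0_neq0.
have r0_lt0 : r 0%N < 0.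
  rewrite ltNge; apply/negP => r0_ge0.
  have r_gt0 j : (0 <= j < J.-1)%N -> 0 < r j.
    case/andP=> _ j_lt; rewrite lt_def r_neq0 //=.
    have [->|j_gt0] := posnP j; first exact: r0_ge0.
    exact/ltW/(le_lt_trans r0_ge0)/(ltn_homo_prefix r_inc j_gt0 j_lt).
  have none_below : forall j, (j < 0)%N -> r j < 0 by [].
  have := signed_prod_gt0 (leq0n J.-1) none_below r_gt0.
  have -> : \prod_(j < J.-1) (0 - r j) = (tpoly R L J.-1).[0].
    by rewrite tpolyE horner_prod; apply: eq_bigr => j _; rewrite hornerXsubC.
  by rewrite subn0; lra.
have r1_gt0 : 0 < r 1%N.
  rewrite ltNge; apply/negP => r1_le0.
  have r01 := nonpos_root_tpoly_uniq (r_root 0%N ltac:(lia)) (r_root 1%N ltac:(lia))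
                (ltW r0_lt0) r1_le0.
  by have := r_inc 0%N ltac:(lia); rewrite r01 ltxx.
exists r; split => // i /andP[i_gt0 i_lt].
have [->//|i_neq1] := eqVneq i 1%N.
by apply: lt_trans r1_gt0 (ltn_homo_prefix r_inc _ i_lt); lia.
Qed.

Lemma matB_spectrum : exists mu : nat -> R,
  [/\ forall i, (i.+1 < J)%N -> mu i < mu i.+1,
      forall k, (k < J)%N -> eigenvalue (matB R J L) (mu k),
      -1 < mu 0%N, mu 1%N = 0 & mu J.-1 < 8].
Proof.
have [r [r_inc r_bnd r_root r0_lt0 r_pos]] := tpoly_roots_sign.
pose mu k := if k is k'.+1 then (if k' is _.+1 then r k' else 0) else r 0%N.
exists mu; split.
- case=> [|[|i]] i_lt /=; first exact: r0_lt0.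
    by apply: r_pos; lia.
  by apply: r_inc; lia.
- case=> [|[|k]] k_lt /=; first 2 last.
  + by apply: eigenvalue_matB_root; [rewrite gt_eqF // r_pos | apply: r_root]; lia.
  + by apply: eigenvalue_matB_root; [rewrite lt_eqF | apply: r_root; lia].
  + exact: eigenvalue_matB0.
- by case/andP: (r_bnd 0%N ltac:(lia)).
- by [].
- have -> : J.-1 = (J - 3).+2 by lia.
  by case/andP: (r_bnd (J - 3).+1 ltac:(lia)).
Qed.

End Spectrum.

(* mu k (0 <= k < J) stands for the paper's mu_{k-1}: mu 0 = mu_{-1}, mu 1 = mu_0 = 0, ...,
   mu (J-1) = mu_{J-2}. *)
Theorem proposition3p1 (R : realType) (J L : nat)
  (hJ : (5 <= J)%N) (hL1 : (2 <= L)%N) (hL2 : (L <= J - 1)%N) :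
  diagonalizable (matB R J L) /\
  (exists mu : nat -> R,
      (forall i j : nat, (i < j)%N -> (j < J)%N -> mu i < mu j) /\
      (forall a : R, eigenvalue (matB R J L) a <-> exists2 k : nat, (k < J)%N & a = mu k) /\
      -1 < mu 0%N /\ mu 0%N < 0 /\ mu 1%N = 0 /\ mu J.-1 < 8) /\
  (exists! a : R, eigenvalue (matB R J L) a /\ a < 0).
Proof.
have J_gt1 : (1 < J)%N by lia.
have L_le : (L <= J.-1)%N by rewrite -subn1.
have [mu [mu_inc mu_eigen mu0_gt mu1 muJ]] := @matB_spectrum R J L J_gt1 hL1 L_le (ltnW hJ).
have mu_lt := ltn_homo_prefix mu_inc.
have eigenP := eigenvalue_increasingP mu_inc mu_eigen.
have mu0_lt0 : mu 0%N < 0 by rewrite -mu1; apply: mu_lt.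
split; first exact: diagonalizable_increasing_eigenvalues mu_inc mu_eigen.
split; first by exists mu.
exists (mu 0%N); split=> [|a [/eigenP [k k_lt ->] mu_k_lt0]].
  by split => //; apply: mu_eigen; lia.
case: k k_lt mu_k_lt0 => [//|[|k] k_lt]; first by rewrite mu1 ltxx.
by have := mu_lt 1%N k.+2 isT k_lt; rewrite mu1; lra.
Qed.
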